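(* Consider the storage arbitrage model and Algorithm 1 described in the context. For each period $i$, the optimal reservation $M_i^*$ produced by Algorithm 1 depends solely on those $M_j^*$ with $M_j^*<M_i^*$; that is, the exact values of the $M_j^*$ with $M_j^*\ge M_i^*$ are not needed to determine $M_i^*$.
   Context: Time-of-Use (ToU) setting: a day is divided into periods $1,\dots,n$ with electricity price $\pi_i$ in period $i$, and $\pi_n=\min_i \pi_i$. The user has random demand $X_i$ in period $i$; the $X_i$ are independent, inelastic, and $X_i$ has a continuously differentiable density $f_i$ with $f_i(x)>0$ iff $x\ge 0$. The user owns a lossless, perfectly efficient storage of capacity $C$; $r_i$ is the energy stored at the end of period $i$, $r_0=r_n=C$, the purchase in period $i$ is $u_i=r_i+X_i-r_{i-1}\ge0$, and the expected total cost is $J=\mathbb{E}\big[\sum_{i=1}^n \pi_i(r_i+X_i-r_{i-1})\big]$. A virtual-reservation policy is a sequence $M_1,\dots,M_n$ fixed in advance (possibly exceeding $C$); at the end of period $i$ the user keeps at least $N_i=\min\{M_i,C\}$ in storage, i.e. $r_i=\max\{N_i, r_{i-1}-X_i\}$, buying from the grid only when needed; the last period's reservation fully charges the storage. $J_i(M_i):=J_i(M_i\mid M_{i+1}^*,\dots,M_n^* )$ is the expected cost over periods $i+1,\dots,n$ when reserving $M_i$ at the end of period $i$ and $M_{i+1}^*,\dots,M_n^*$ afterward. Algorithm 1 computes the $M_i^*$ backward, starting from the boundary condition that the last period's reservation is $C$ and treating the capacity as large enough that the computed reservations are not truncated: given $M_{i+1}^*,\dots,M_n^*$, if $\pi_i\ge\pi_{i+1}$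 it returns $M_i^*=0$; otherwise it returns the (unique) $M_i$ solving $\pi_i=-\frac{\mathrm{d}J_i}{\mathrm{d}M_i}$, equivalently $\pi_i=\sum_{k=i+1}^n \pi_k P_k^i(M_i)$, where $P_k^i(M_i)$ is the probability that, reserving $M_i,M_{i+1}^*,\dots,M_n^*$, period $k$ is the first period after $i$ in which the user must buy energy to charge the storage. *)

From HB Require Import structures.
From mathcomp Require Import all_boot all_order all_algebra.
From mathcomp Require Import all_classical all_reals all_analysis.
Set Implicit Arguments. Unset Strict Implicit. Unset Printing Implicit Defensive.
Import Order.TTheory GRing.Theory Num.Theory.
Import numFieldNormedType.Exports.
Local Open Scope classical_set_scope.
Local Open Scope ring_scope.

Section ToU.
Context {d : measure_display} {T : measurableType d} {R : realType}
  (P : probability T R).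

Definition cumdem (X : nat -> {RV P >-> R}) (i j : nat) (w : T) : R :=
  \sum_(i.+1 <= l < j.+1) X l w.

(* Event: reserving m at the end of period i and M j at the end of each later
   period j (no truncation by the capacity), period k is the first period
   after i in which the user must buy energy, i.e. r_{k-1} - X_k < M_k while
   r_{j-1} - X_j >= M_j for i < j < k (so that r_{j} = m - X_{i+1} - ... - X_j). *)
Definition firstbuy (X : nat -> {RV P >-> R}) (M : nat -> R) (m : R)
    (i k : nat) : set T :=
  [set w | (forall j, (i < j < k)%N -> M j <= m - cumdem X i j w) /\
           m - cumdem X i k w < M k].

Definition Pfirst (X : nat -> {RV P >-> R}) (M : nat -> R) (m : R)
    (i k : nat) : R :=
  fine (P (firstbuy X M m i k)).

(* One backward step of Algorithm 1: given the later reservations M (only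
   M (i+1), ..., M n are used), m is the value returned for period i. *)
Definition alg_step (n : nat) (pi : nat -> R) (X : nat -> {RV P >-> R})
    (M : nat -> R) (i : nat) (m : R) : Prop :=
  (pi i.+1 <= pi i /\ m = 0) \/
  (pi i < pi i.+1 /\
   pi i = \sum_(i.+1 <= k < n.+1) pi k * Pfirst X M m i k).

Definition indep_demands (n : nat) (X : nat -> {RV P >-> R}) : Prop :=
  forall B : nat -> set R, (forall l, measurable (B l)) ->
    fine (P (\bigcap_(l in [set l | (1 <= l <= n)%N]) (X l @^-1` B l))) =
    \prod_(1 <= l < n.+1) fine (P (X l @^-1` B l)).

Definition is_density (Y : {RV P >-> R}) (f : R -> R) : Prop :=
  forall A : set R, measurable A ->
    P (Y @^-1` A) = (\int[lebesgue_measure]_(x in A) (f x)%:E)%E.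

End ToU.

(* The demands have densities vanishing on the negative half-line, so almost
   surely every X_l is strictly positive.  Hence, after reserving m at the end
   of period i, the storage level m - (X_{i+1} + ... + X_j) at every later
   period j is strictly below m.  A later reservation M_j >= m is therefore
   never met without buying, whatever its exact value: outside a null set the
   events defining P_k^i(m) only depend on the M_j < m, and so does the
   equation of Algorithm 1 that determines m = M_i^*. *)

From HB Require Import structures.
From mathcomp Require Import all_boot all_order all_algebra.
From mathcomp Require Import all_classical all_reals all_analysis.
From mathcomp Require Import measurable_realfun lra zify.
Set Implicit Arguments. Unset Strict Implicit. Unset Printing Implicit Defensive.
Import Order.TTheory GRing.Theory Num.Theory.
Import numFieldNormedType.Exports.
Local Open Scope classical_set_scope.
Local Open Scope ring_scope.

Lemma integral_le0 d (T : measurableType d) (R : realType)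
    (mu : {measure set T -> \bar R}) (D : set T) (f : T -> R) :
  (forall x, D x -> f x <= 0) -> (\int[mu]_(x in D) (f x)%:E <= 0)%E.
Proof.
move=> f_le0; rewrite integralE integral0_eq; last first.
  move=> x Dx; apply: (le0_funeposE (D := D)); last by rewrite inE.
  by move=> y Dy; rewrite lee_fin f_le0.
by rewrite sub0e leeNl oppe0; apply: integral_ge0 => x _; exact: funeneg_ge0.
Qed.

Lemma measure_eq_off_negligible d (T : measurableType d) (R : realType)
    (mu : {measure set T -> \bar R}) (A B N : set T) :
  measurable A -> measurable B -> mu.-negligible N ->
  (forall w, ~ N w -> A w <-> B w) -> mu A = mu B.
Proof.
move=> mA mB [N' [mN' N'0 NN']] AB.
have le_off (A' B' : set T) : measurable A' -> measurable B' ->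
    (forall w, ~ N w -> A' w -> B' w) -> (mu A' <= mu B')%E.
  move=> mA' mB' A'B'; rewrite -(measureU0 mB' mN' N'0).
  apply: le_measure; rewrite ?inE //; first exact: measurableU.
  move=> w A'w; have [/NN' N'w|Nw] := pselect (N w); first by right.
  by left; exact: A'B' Nw A'w.
by apply/eqP; rewrite eq_le !le_off // => w /AB [].
Qed.

(* The level [m - c], [c > 0], is below [m], so it clears no reservation
   [a >= m]: only whether [a < m], not the exact value, matters. *)
Lemma level_clears_agree (R : realDomainType) (m c a a' : R) : 0 < c ->
  (a < m -> a' = a) -> (m <= a -> m <= a') -> (a <= m - c) = (a' <= m - c).
Proof.
move=> c_gt0 below above; have [/below -> //|am] := ltP a m.
have ma' := above am; rewrite !lt_geF //; lra.
Qed.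

Section reservation_events.
Context d (T : measurableType d) (R : realType) (P : probability T R).

Lemma density_negligible_nonpos (Y : {RV P >-> R}) (g : R -> R) :
  is_density Y g -> (forall x, x < 0 -> g x <= 0) ->
  P.-negligible (Y @^-1` `]-oo, 0]).
Proof.
move=> Yg g_le0.
have below0 : P (Y @^-1` `]-oo, 0[) = 0%E.
  apply/eqP; rewrite eq_le measure_ge0 andbT Yg; last exact: measurable_itv.
  by apply: integral_le0 => x /=; rewrite in_itv /=; exact: g_le0.
have at0 : P (Y @^-1` [set 0]) = 0%E.
  by rewrite Yg ?integral_set1 //; exact: measurable_set1.
have -> : Y @^-1` `]-oo, 0] = Y @^-1` `]-oo, 0[ `|` Y @^-1` [set 0].
  by apply/seteqP; split => w /=; rewrite !in_itv /= le_eqVlt;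
    [case/orP => [/eqP|]; [right|left]|case => [->|->]; rewrite ?eqxx ?orbT].
apply: negligibleU; apply/negligibleP => //.
exact: measurable_funPTI (measurable_itv _).
Qed.

Lemma measurable_cumdem (X : nat -> {RV P >-> R}) i j :
  measurable_fun setT (cumdem X i j).
Proof. by apply: measurable_sum => l; exact: measurable_funP. Qed.

Lemma measurable_firstbuy (X : nat -> {RV P >-> R}) M m i k :
  measurable (firstbuy X M m i k).
Proof.
pose level j w := m - cumdem X i j w.
have mlevel j (I : set R) : measurable I -> measurable (level j @^-1` I).
  move=> mI; rewrite -[X in measurable X]setTI.
  by apply: measurable_funB => //; exact: measurable_cumdem.
have -> : firstbuy X M m i k =
    \bigcap_(j in [set j | (i < j < k)%N]) (level j @^-1` `[M j, +oo[)
    `&` level k @^-1` `]-oo, M k[.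
  apply/seteqP; split => w [below buy]; split; rewrite /= ?in_itv //=;
    by move=> j /below; rewrite /= ?in_itv /= ?andbT.
apply: measurableI; last exact: mlevel (measurable_itv _).
by apply: bigcap_measurableType => j _; exact: mlevel (measurable_itv _).
Qed.

Lemma cumdem_gt0 (X : nat -> {RV P >-> R}) i j w : (i < j)%N ->
  (forall l, (i < l <= j)%N -> 0 < X l w) -> 0 < cumdem X i j w.
Proof.
move=> ij X_gt0; rewrite /cumdem.
apply: le_lt_trans (ltr_sum_nat (m := i.+1) (n := j.+1) (F := fun=> 0) ij _).
  by rewrite big1_eq.
by move=> l /andP[il lj]; apply: X_gt0; rewrite il.
Qed.

Lemma firstbuy_agree (X : nat -> {RV P >-> R}) (M M' : nat -> R) (m : R)
    (i k : nat) w : (i < k)%N ->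
  (forall j, (i < j <= k)%N ->
     (M j <= m - cumdem X i j w) = (M' j <= m - cumdem X i j w)) ->
  firstbuy X M m i k w <-> firstbuy X M' m i k w.
Proof.
move=> ik MM'; have ijk j : (i < j < k)%N -> (i < j <= k)%N by lia.
rewrite /firstbuy /= !ltNge -MM' ?ik ?leqnn //.
by split => -[below buy]; split => // j jk;
  [rewrite -MM' ?ijk|rewrite MM' ?ijk] => //; apply: below.
Qed.

End reservation_events.

Theorem lemma3 (d : measure_display) (T : measurableType d) (R : realType)
    (P : probability T R) (n : nat) (pi : nat -> R) (C : R)
    (X : nat -> {RV P >-> R}) (f : nat -> R -> R) (Mstar : nat -> R) :
  (forall i, (1 <= i <= n)%N -> pi n <= pi i) ->
  0 <= C ->
  indep_demands n X ->
  (forall i, (1 <= i <= n)%N ->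
     [/\ is_density (X i) (f i),
         (forall x, 0 < f i x <-> 0 <= x),
         (forall x, 0 < x -> derivable (f i) x 1) &
         (forall x, 0 < x -> {for x, continuous (derive1 (f i))})]) ->
  Mstar n = C ->
  (forall i, (1 <= i < n)%N -> alg_step n pi X Mstar i (Mstar i)) ->
  forall i, (1 <= i < n)%N ->
  forall M' : nat -> R,
    (forall j, (i < j <= n)%N -> Mstar j < Mstar i -> M' j = Mstar j) ->
    (forall j, (i < j <= n)%N -> Mstar i <= Mstar j -> Mstar i <= M' j) ->
    alg_step n pi X M' i (Mstar i).
Proof.
move=> _ _ _ dens _ step i i_range M' below above.
have [[? ?]|[? pi_eq]] := step i i_range; [by left|right; split => //].
rewrite pi_eq; apply: eq_big_nat => k /andP[ik kn]; congr (_ * fine _).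
pose N := \big[setU/set0]_(i.+1 <= l < n.+1) (X l @^-1` `]-oo, 0]).
have N0 : P.-negligible N.
  rewrite /N big_nat_cond; apply: negligible_bigsetU => l /andP[/andP[il ln] _].
  have [Xf f_pos _ _] := dens l (ltac:(lia)).
  apply: density_negligible_nonpos Xf _ => x x_lt0.
  by rewrite leNgt; apply/negP => /f_pos; rewrite leNgt x_lt0.
apply: (measure_eq_off_negligible (measurable_firstbuy _ _ _ _ _)
  (measurable_firstbuy _ _ _ _ _) N0) => w Nw.
have X_gt0 l : (i < l <= n)%N -> 0 < X l w.
  move=> il; rewrite ltNge; apply/negP => Xle0; apply: Nw.
  by rewrite /N -bigcup_seq; exists l; rewrite /= ?mem_index_iota ?in_itv.
apply: firstbuy_agree => // j /andP[ij jk].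
have jn : (i < j <= n)%N by lia.
apply: level_clears_agree (below j jn) (above j jn).
by apply: cumdem_gt0 => // l /andP[il lj]; apply: X_gt0; lia.
Qed.
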